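(* Let $p$ be an odd prime and let $O_n(\mathbb Z_{(p)})$ act on $\mathbb Z_{(p)}^n$ in the canonical way. Then $H_i(O_n(\mathbb Z_{(p)});\mathbb Z_{(p)}^n)=0$ for $i\leq\frac{n-8}{2}$.
   Context: $\mathbb Z_{(p)}$ is the localization of $\mathbb Z$ at the prime ideal $(p)$. $O_n(\mathbb Z_{(p)})$ is the group of $\mathbb Z_{(p)}$-linear automorphisms of $\mathbb Z_{(p)}^n$ preserving the form $x_1^2+\dots+x_n^2$. *)

From HB Require Import structures.
From mathcomp Require Import all_boot all_order all_algebra.
Set Implicit Arguments. Unset Strict Implicit. Unset Printing Implicit Defensive.
Import Order.TTheory GRing.Theory Num.Theory.
Local Open Scope ring_scope.

(** Z_(p), the localization of Z at (p), as a subring of Q: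
    rationals whose (reduced, positive) denominator is not divisible by p. *)
Definition inZp (p : nat) (q : rat) : bool := ~~ (p %| `|denq q|)%N.

Definition inZpvec (p n : nat) (v : 'cV[rat]_n) : bool :=
  [forall i, inZp p (v i 0)].

Definition inZpmx (p n : nat) (A : 'M[rat]_n) : bool :=
  [forall i, forall j, inZp p (A i j)].

Definition sqform (n : nat) (v : 'cV[rat]_n) : rat := \sum_(i < n) v i 0 ^+ 2.

Definition inOn (p n : nat) (A : 'M[rat]_n) : Prop :=
  [/\ inZpmx p A, A \in unitmx, inZpmx p (invmx A) &
      forall v : 'cV[rat]_n, inZpvec p v -> sqform (A *m v) = sqform v].

(** Group homology H_*(G; M) via the (inhomogeneous) bar complex.
    G is a group of n x n rational matrices (given by a predicate), M a
    G-stable additive subgroup of Q^n (given by a predicate), with the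
    canonical left action g . m = g *m m.  As usual, M is turned into a right
    ZG-module by m . g = g^-1 m, and C_i(G;M) = M (x)_{ZG} B_i = (+)_{G^i} M.
    A chain is a formal finite sum of terms m [g_1|...|g_i], represented by a
    list of pairs ([:: g_1; ...; g_i], m). *)
Definition term n := (seq 'M[rat]_n * 'cV[rat]_n)%type.

Definition merge n (j : nat) (g : seq 'M[rat]_n) : seq 'M[rat]_n :=
  take j g ++ (nth 0 g j *m nth 0 g j.+1) :: drop j.+2 g.

Definition bd_term n (t : term n) : seq (term n) :=
  match t.1 with
  | [::] => [::]
  | g1 :: gs =>
      (gs, invmx g1 *m t.2)
      :: [seq (merge j t.1, (-1) ^+ j.+1 *: t.2) | j <- iota 0 (size t.1).-1]
      ++ [:: (take (size t.1).-1 t.1, (-1) ^+ size t.1 *: t.2)]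
  end.

Definition bd n (c : seq (term n)) : seq (term n) := flatten (map (@bd_term n) c).

Definition ev n (c : seq (term n)) (y : seq 'M[rat]_n) : 'cV[rat]_n :=
  \sum_(t <- c | t.1 == y) t.2.

Definition is_chain n (G : 'M[rat]_n -> Prop) (M : pred 'cV[rat]_n)
    (i : nat) (c : seq (term n)) : Prop :=
  forall t, t \in c -> [/\ size t.1 = i, forall g, g \in t.1 -> G g & M t.2].

Definition homology_vanishes n (G : 'M[rat]_n -> Prop) (M : pred 'cV[rat]_n)
    (i : nat) : Prop :=
  forall c : seq (term n), is_chain G M i c ->
    (forall y, ev (bd c) y = 0) ->
    exists b : seq (term n), is_chain G M i.+1 b /\
      forall y, ev (bd b) y = ev c y.

From Pilot Require Import Defs.
From mathcomp Require Import all_boot all_order all_algebra.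
From mathcomp Require Import zify ring.
Set Implicit Arguments. Unset Strict Implicit. Unset Printing Implicit Defensive.
Import Order.TTheory GRing.Theory Num.Theory.
Local Open Scope ring_scope.

(* The scalar matrix -1 lies in O_n(Z_(p)), is central, and acts on Z_(p)^n by -1.
   For a central scalar matrix z = a, inserting z into every slot of a bar with
   alternating signs is a chain homotopy h with dh + hd = a^-1 - 1, the right action
   of z minus the identity. *)

Arguments Defs.merge : simpl never.

Section Insertion.
Variables (n : nat) (z : 'M[rat]_n).
Local Notation merge := (@Defs.merge n).

Definition ins (j : nat) (g : seq 'M[rat]_n) := take j g ++ z :: drop j g.
Arguments ins : simpl never.

Lemma ins0 g : ins 0 g = z :: g.
Proof. by rewrite /ins take0 drop0. Qed.

Lemma insS j a g : ins j.+1 (a :: g) = a :: ins j g.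
Proof. by []. Qed.

Lemma ins_neq0 j g : ins j g != [::].
Proof. by rewrite /ins; case: (take j g). Qed.

Lemma size_ins j g : (j <= size g)%N -> size (ins j g) = (size g).+1.
Proof. by move=> le_jg; rewrite size_cat /= size_takel // size_drop; lia. Qed.

Lemma mergeS k a g : merge k.+1 (a :: g) = a :: merge k g.
Proof. by []. Qed.

Lemma merge0 a b g : merge 0 [:: a, b & g] = (a *m b) :: g.
Proof. by rewrite /Defs.merge /= drop0. Qed.

Lemma size_merge k g : (k.+1 < size g)%N -> size (merge k g) = (size g).-1.
Proof. by move=> lt_kg; rewrite size_cat /= size_takel ?size_drop; lia. Qed.

Lemma merge_ins_lt k j g : (k.+1 < j)%N -> (j <= size g)%N ->
  merge k (ins j g) = ins j.-1 (merge k g).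
Proof.
elim: g j k => [|a g IH] [|j] [|k] //= lt_kj le_jg.
- by case: j g lt_kj le_jg {IH} => [|j] [|b g] // _ _; rewrite insS insS !merge0.
- by rewrite insS mergeS IH //; case: j lt_kj le_jg => [|j].
Qed.

Lemma merge_ins_gt k j g : (j <= k)%N -> (k.+1 < size g)%N ->
  merge k.+1 (ins j g) = ins j (merge k g).
Proof.
elim: g j k => [|a g IH] [|j] k //= le_jk lt_kg; first by rewrite ins0 mergeS ins0.
by case: k le_jk lt_kg => [|k] // le_jk lt_kg; rewrite insS !mergeS insS IH.
Qed.

Lemma merge_ins_right k g : (k < size g)%N ->
  merge k (ins k.+1 g) = take k g ++ (nth 0 g k *m z) :: drop k.+1 g.
Proof.
elim: g k => [|a g IH] [|k] //= lt_kg; first by rewrite insS ins0 merge0 /= ?drop0.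
by rewrite insS mergeS IH.
Qed.

Lemma merge_ins_left k g : (k < size g)%N ->
  merge k (ins k g) = take k g ++ (z *m nth 0 g k) :: drop k.+1 g.
Proof. by elim: g k => [|a g IH] [|k] //= lt_kg; rewrite insS mergeS IH. Qed.

Lemma mem_ins x j g : (x \in ins j g) = (x == z) || (x \in g).
Proof. by rewrite /ins -{3}(cat_take_drop j g) !mem_cat in_cons orbCA. Qed.

Lemma take_ins_size g : take (size g) (ins (size g) g) = g.
Proof. by rewrite /ins take_size take_cat ltnn subnn take0 cats0. Qed.

Lemma take_ins j g : (j < size g)%N ->
  take (size g) (ins j g) = ins j (take (size g).-1 g).
Proof.
elim: g j => [|a g IH] [|j] // lt_jg; first by rewrite /= !ins0.
rewrite [size _]/= insS /= IH //.
by case: g IH lt_jg => [|b g].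
Qed.

End Insertion.
Arguments ins : simpl never.

Section Coefficients.
Variable n : nat.
Local Notation V := 'cV[rat]_n.
Local Notation merge := (@Defs.merge n).

Definition ev1 (y x : seq 'M[rat]_n) (v : V) : V := if x == y then v else 0.

Lemma ev10 y x : ev1 y x 0 = 0.
Proof. by rewrite /ev1; case: ifP. Qed.

Lemma ev1D y x u v : ev1 y x (u + v) = ev1 y x u + ev1 y x v.
Proof. by rewrite /ev1; case: ifP; rewrite ?addr0. Qed.

Lemma ev1Z y x c v : ev1 y x (c *: v) = c *: ev1 y x v.
Proof. by rewrite /ev1; case: ifP; rewrite ?scaler0. Qed.

Lemma evE (c : seq (term n)) y : ev c y = \sum_(t <- c) ev1 y t.1 t.2.
Proof. by rewrite /ev big_mkcond; apply: eq_bigr => t _; rewrite /ev1 eq_sym. Qed.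

Lemma ev_nil y : ev [::] y = 0 :> V.
Proof. by rewrite /ev big_nil. Qed.

Lemma ev_cons (t : term n) c y : ev (t :: c) y = ev1 y t.1 t.2 + ev c y.
Proof. by rewrite /ev big_cons /ev1; case: ifP; rewrite ?add0r. Qed.

Lemma ev_cat (c1 c2 : seq (term n)) y : ev (c1 ++ c2) y = ev c1 y + ev c2 y.
Proof. by rewrite /ev big_cat. Qed.

Lemma ev_flatten (f : term n -> seq (term n)) c y :
  ev (flatten (map f c)) y = \sum_(t <- c) ev (f t) y.
Proof.
elim: c => [|t c IH]; first by rewrite big_nil ev_nil.
by rewrite /= ev_cat IH big_cons.
Qed.

Lemma ev_map_iota (f : nat -> term n) k y :
  ev (map f (iota 0 k)) y = \sum_(0 <= j < k) ev1 y (f j).1 (f j).2.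
Proof.
rewrite /index_iota subn0; elim: (iota 0 k) => [|j s IH]; first by rewrite big_nil ev_nil.
by rewrite /= ev_cons IH big_cons.
Qed.

Lemma ev_bd_term (x : seq 'M[rat]_n) v y : x != [::] ->
  ev (bd_term (x, v)) y =
  ev1 y (behead x) (invmx (head 0 x) *m v)
  + \sum_(0 <= k < (size x).-1) ev1 y (merge k x) ((-1) ^+ k.+1 *: v)
  + ev1 y (take (size x).-1 x) ((-1) ^+ size x *: v).
Proof.
case: x => [|a x] // _.
by rewrite /bd_term /= ev_cons ev_cat ev_map_iota ev_cons ev_nil addr0 addrA.
Qed.

Lemma ev_bd_termZ (x : seq 'M[rat]_n) s v y :
  ev (bd_term (x, s *: v)) y = s *: ev (bd_term (x, v)) y.
Proof.
case: x => [|b x]; first by rewrite /bd_term /= ev_nil scaler0.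
rewrite !ev_bd_term // !scalerDr -scalemxAr ev1Z scaler_sumr.
congr (_ + _ + _); last by rewrite scalerA mulrC -scalerA ev1Z.
by apply: eq_bigr => k _; rewrite scalerA mulrC -scalerA ev1Z.
Qed.

Definition scale_chain s (c : seq (term n)) : seq (term n) :=
  [seq (t.1, s *: t.2) | t <- c].

Lemma ev_bd_scale_chain s c y : ev (bd (scale_chain s c)) y = s *: ev (bd c) y.
Proof.
rewrite /bd !ev_flatten big_map scaler_sumr.
by apply: eq_bigr => t _; rewrite ev_bd_termZ -surjective_pairing.
Qed.

Lemma big_terms_ev (A : seq 'M[rat]_n -> V -> V) (c : seq (term n)) s :
  (forall x, A x 0 = 0) -> (forall x u v, A x (u + v) = A x u + A x v) ->
  uniq s -> {subset map fst c <= s} ->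
  \sum_(t <- c) A t.1 t.2 = \sum_(x <- s) A x (ev c x).
Proof.
move=> A0 AD uniq_s; elim: c => [|t c IH] sub_cs.
  by rewrite big_nil big1_seq // => x _; rewrite ev_nil A0.
rewrite big_cons IH => [|x cx]; last by apply: sub_cs; rewrite inE cx orbT.
under [in RHS]eq_bigr => x _ do rewrite ev_cons AD.
rewrite big_split /=; congr (_ + _).
rewrite (bigD1_seq t.1) ?sub_cs ?mem_head //= /ev1 eqxx big1 ?addr0 // => x neq_xt.
by rewrite eq_sym (negPf neq_xt) A0.
Qed.

End Coefficients.

Section CentralScalarHomotopy.
Variables (n : nat) (a : rat).
Local Notation V := 'cV[rat]_n.
Local Notation merge := (@Defs.merge n).
Local Notation z := (a%:M : 'M[rat]_n).
Local Notation ins := (ins z).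

Definition hmt_term (t : term n) : seq (term n) :=
  [seq (ins j t.1, (-1) ^+ j *: t.2) | j <- iota 0 (size t.1).+1].

Definition hmt (c : seq (term n)) : seq (term n) := flatten (map hmt_term c).

Lemma ev_hmt_term g m y :
  ev (hmt_term (g, m)) y = \sum_(0 <= j < (size g).+1) ev1 y (ins j g) ((-1) ^+ j *: m).
Proof. exact: ev_map_iota. Qed.

Lemma signrS j (v : V) : (-1) ^+ j.+1 *: v = - ((-1) ^+ j *: v).
Proof. by rewrite exprS mulN1r scaleNr. Qed.

Lemma sign_sq j : (-1) ^+ j * (-1) ^+ j = 1 :> rat.
Proof. by rewrite -expr2 -exprM mulnC exprM sqrrN !expr1n. Qed.

Lemma first_faces_hmt b g m y :
  \sum_(0 <= j < (size g).+2)
      ev1 y (behead (ins j (b :: g))) (invmx (head 0 (ins j (b :: g))) *m ((-1) ^+ j *: m))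
  + \sum_(0 <= j < (size g).+1) ev1 y (ins j g) ((-1) ^+ j *: (invmx b *m m))
  = ev1 y (b :: g) (a^-1 *: m).
Proof.
rewrite big_nat_recl // ins0 expr0 scale1r [behead _]/= [head _ _]/= invmx_scalar.
rewrite mul_scalar_mx -addrA -big_split big1 ?addr0 // => j _.
by rewrite insS /= -ev1D -scalemxAr signrS addNr ev10.
Qed.

Lemma last_faces_hmt g m y :
  \sum_(0 <= j < (size g).+1)
      ev1 y (take (size g) (ins j g)) ((-1) ^+ (size g).+1 *: ((-1) ^+ j *: m))
  + \sum_(0 <= j < size g) ev1 y (ins j (take (size g).-1 g)) ((-1) ^+ j *: ((-1) ^+ size g *: m))
  = ev1 y g (- m).
Proof.
rewrite big_nat_recr //= take_ins_size signrS scalerA sign_sq scale1r addrAC.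
rewrite -big_split big_nat_cond big1 ?add0r // => j; rewrite andbT => /andP[_ lt_jg].
by rewrite /= take_ins // -ev1D signrS !scalerA mulrC addNr ev10.
Qed.

(* They cancel in pairs by [merge_ins_lt] and
   [merge_ins_gt], except for the two faces of one insertion that absorb z into a
   neighbour, which cancel because z is central. *)
Definition bd_hmt_inner g m y j k : V :=
  ev1 y (merge k (ins j g)) ((-1) ^+ k.+1 *: ((-1) ^+ j *: m)).

Definition hmt_bd_inner g m y j k : V :=
  ev1 y (ins j (merge k g)) ((-1) ^+ j *: ((-1) ^+ k.+1 *: m)).

Lemma bd_hmt_inner_lower g m y j : (j < size g)%N ->
  \sum_(0 <= k < j.+1) bd_hmt_inner g m y j.+1 k
  = bd_hmt_inner g m y j.+1 j - \sum_(0 <= k < j) hmt_bd_inner g m y j k.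
Proof.
move=> lt_jg; rewrite big_nat_recr //= addrC -sumrN; congr (_ + _).
apply: eq_big_nat => k /andP[_ lt_kj].
rewrite /bd_hmt_inner /hmt_bd_inner merge_ins_lt //= !ev1Z -scaleNr !scalerA.
by congr (_ *: _); rewrite !exprS; ring.
Qed.

Lemma bd_hmt_inner_upper g m y j : (j < size g)%N ->
  \sum_(j <= k < size g) bd_hmt_inner g m y j k
  = bd_hmt_inner g m y j j - \sum_(j <= k < (size g).-1) hmt_bd_inner g m y j k.
Proof.
move=> lt_jg; rewrite big_ltn // -sumrN; congr (_ + _).
rewrite big_add1; apply: eq_big_nat => k /andP[le_jk lt_kg].
rewrite /bd_hmt_inner /hmt_bd_inner merge_ins_gt //; last by lia.
rewrite !ev1Z -scaleNr !scalerA.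
by congr (_ *: _); rewrite !exprS; ring.
Qed.

Lemma bd_hmt_inner_adjacent g m y j : (j < size g)%N ->
  bd_hmt_inner g m y j.+1 j + bd_hmt_inner g m y j j = 0.
Proof.
move=> lt_jg; rewrite /bd_hmt_inner merge_ins_right // merge_ins_left // scalar_mxC.
by rewrite -ev1D !scalerA -scalerDl !exprS [X in X *: m](_ : _ = 0) ?scale0r ?ev10 //; ring.
Qed.

Lemma inner_faces_hmt g m y :
  \sum_(0 <= j < (size g).+1) \sum_(0 <= k < size g) bd_hmt_inner g m y j k
  + \sum_(0 <= k < (size g).-1) \sum_(0 <= j < size g) hmt_bd_inner g m y j k = 0.
Proof.
set s := size g.
have split_bd_hmt j : (0 <= j < s.+1)%N -> \sum_(0 <= k < s) bd_hmt_inner g m y j k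
    = \sum_(0 <= k < j) bd_hmt_inner g m y j k + \sum_(j <= k < s) bd_hmt_inner g m y j k.
  by move=> /andP[_ le_js]; rewrite -big_cat_nat.
have split_hmt_bd j : (0 <= j < s)%N -> \sum_(0 <= k < s.-1) hmt_bd_inner g m y j k
    = \sum_(0 <= k < j) hmt_bd_inner g m y j k + \sum_(j <= k < s.-1) hmt_bd_inner g m y j k.
  by move=> /andP[_ lt_js]; rewrite -big_cat_nat //; lia.
rewrite (eq_big_nat _ _ split_bd_hmt) big_split /= big_nat_recl // big_geq // add0r.
rewrite [X in _ + X + _]big_nat_recr //= (big_geq (leqnn _)) addr0.
rewrite exchange_big_nat (eq_big_nat _ _ split_hmt_bd) big_split /=.
under eq_big_nat => j /andP[_ lt_js] do rewrite bd_hmt_inner_lower //.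
under [X in _ + X + _]eq_big_nat => j /andP[_ lt_js] do rewrite bd_hmt_inner_upper //.
rewrite !big_split !sumrN /= -/s addrACA !subrK -big_split big_nat_cond big1 // => j.
by rewrite andbT => /andP[_ lt_js]; apply: bd_hmt_inner_adjacent.
Qed.

Lemma ev_bd_hmt_term g m y : ev (bd (hmt_term (g, m))) y =
  \sum_(0 <= j < (size g).+1)
    (ev1 y (behead (ins j g)) (invmx (head 0 (ins j g)) *m ((-1) ^+ j *: m))
     + \sum_(0 <= k < size g) bd_hmt_inner g m y j k
     + ev1 y (take (size g) (ins j g)) ((-1) ^+ (size g).+1 *: ((-1) ^+ j *: m))).
Proof.
rewrite /bd ev_flatten big_map /index_iota subn0.
apply: eq_big_seq => j; rewrite mem_iota ltnS => /andP[_ le_jg].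
by rewrite ev_bd_term ?ins_neq0 // size_ins.
Qed.

Lemma ev_hmt_bd_term b g m y : ev (hmt (bd_term (b :: g, m))) y =
  \sum_(0 <= j < (size g).+1) ev1 y (ins j g) ((-1) ^+ j *: (invmx b *m m))
  + \sum_(0 <= k < size g) \sum_(0 <= j < (size g).+1) hmt_bd_inner (b :: g) m y j k
  + \sum_(0 <= j < (size g).+1) ev1 y (ins j (take (size g) (b :: g)))
      ((-1) ^+ j *: ((-1) ^+ (size g).+1 *: m)).
Proof.
rewrite /hmt ev_flatten /bd_term /= big_cons big_cat big_map big_seq1 /= !ev_hmt_term /= addrA.
congr (_ + _ + _); last by rewrite size_takel.
rewrite /index_iota subn0; apply: eq_big_seq => k; rewrite mem_iota => /andP[_ lt_kg].
by rewrite ev_hmt_term size_merge.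
Qed.

Lemma ev_bd_hmt_term_add g m y :
  ev (bd (hmt_term (g, m))) y + ev (hmt (bd_term (g, m))) y = ev1 y g ((a^-1 - 1) *: m).
Proof.
case: g => [|b g].
  rewrite ev_bd_hmt_term big_nat1 ins0 /= big_geq // addr0 invmx_scalar mul_scalar_mx.
  by rewrite /hmt /bd_term /= ev_nil addr0 expr1 scaleN1r -ev1D scalerBl scale1r.
rewrite ev_bd_hmt_term ev_hmt_bd_term !big_split /= addrACA [X in X + _]addrACA.
rewrite first_faces_hmt (inner_faces_hmt (b :: g)) (last_faces_hmt (b :: g)).
by rewrite addr0 -ev1D scalerBl scale1r.
Qed.

Lemma ev_flatten_flatten (f g : term n -> seq (term n)) c y :
  ev (flatten (map f (flatten (map g c)))) y = \sum_(t <- c) ev (flatten (map f (g t))) y.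
Proof. by rewrite ev_flatten big_flatten big_map; apply: eq_bigr => t _; rewrite ev_flatten. Qed.

Lemma ev_bd_hmt_add c y :
  ev (bd (hmt c)) y + ev (hmt (bd c)) y = (a^-1 - 1) *: ev c y.
Proof.
rewrite /bd /hmt !ev_flatten_flatten -big_split evE scaler_sumr.
by apply: eq_bigr => -[g m] _; rewrite -ev1Z; exact: ev_bd_hmt_term_add.
Qed.

Lemma ev_hmt_eq0 c y : (forall x, ev c x = 0) -> ev (hmt c) y = 0.
Proof.
(* hmt is additive in the coefficients, so ev (hmt c) only depends on ev c. *)
move=> c0; rewrite /hmt ev_flatten.
rewrite (eq_bigr (fun t => ev (hmt_term (t.1, t.2)) y)) => [|[]//].
rewrite (big_terms_ev (A := fun x v => ev (hmt_term (x, v)) y) (s := undup (map fst c))).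
- by rewrite big1 // => x _; rewrite c0 ev_hmt_term big1 // => j _; rewrite scaler0 ev10.
- by move=> x; rewrite ev_hmt_term big1 // => j _; rewrite scaler0 ev10.
- by move=> x u v; rewrite !ev_hmt_term -big_split; apply: eq_bigr => j _; rewrite scalerDr ev1D.
- exact: undup_uniq.
- by move=> x; rewrite mem_undup.
Qed.

End CentralScalarHomotopy.

Section Chains.
Variables (n : nat) (G : 'M[rat]_n -> Prop) (Mod : pred 'cV[rat]_n).
Hypothesis ModN : forall v, Mod v -> Mod (- v).

Lemma Mod_sign j v : Mod v -> Mod ((-1) ^+ j *: v).
Proof. by move=> Mv; elim: j => [|j IH]; rewrite ?expr0 ?scale1r // signrS ModN. Qed.

Lemma is_chain_hmt a i c : G a%:M -> is_chain G Mod i c -> is_chain G Mod i.+1 (hmt a c).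
Proof.
move=> Ga chain_c u /flatten_mapP[t ct /mapP[j]]; rewrite mem_iota ltnS => /andP[_ le_jt] ->.
have [size_t Gt Mt] := chain_c t ct.
split=> [|g|] /=; first by rewrite size_ins // size_t.
  by rewrite mem_ins => /orP[/eqP-> //|]; apply: Gt.
exact: Mod_sign.
Qed.

Lemma is_chain_scale_chain s i c : (forall v, Mod v -> Mod (s *: v)) ->
  is_chain G Mod i c -> is_chain G Mod i (scale_chain s c).
Proof. by move=> ModZ chain_c _ /mapP[t ct ->]; have [] := chain_c t ct; split=> //; apply: ModZ. Qed.

Theorem homology_vanishes_of_central_scalar (a : rat) i : G a%:M -> a != 1 ->
  (forall v, Mod v -> Mod ((a^-1 - 1)^-1 *: v)) -> homology_vanishes G Mod i.
Proof.
move=> Ga a_neq1 ModZ c chain_c cycle_c.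
have unit_a : a^-1 - 1 != 0 by rewrite subr_eq0 invr_eq1.
exists (scale_chain (a^-1 - 1)^-1 (hmt a c)); split.
  by apply: is_chain_scale_chain => //; apply: is_chain_hmt.
move=> y; rewrite ev_bd_scale_chain.
have := ev_bd_hmt_add a c y; rewrite ev_hmt_eq0 // addr0 => ->.
by rewrite scalerA mulVf ?scale1r.
Qed.

End Chains.

Section LocalIntegers.
Local Notation inZp := Defs.inZp.
Variable p : nat.
Hypothesis p_prime : prime p.

Lemma denq_dvd_of_mulz (x : rat) (d k : int) : x * d%:~R = k%:~R -> (denq x %| d)%Z.
Proof.
move=> xd_int; have : (denq x %| numq x * d)%Z.
  suff -> : numq x * d = k * denq x by rewrite dvdz_mull.
  by apply: (@intr_inj rat); rewrite !rmorphM /= numqE -xd_int; ring.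
by rewrite Gauss_dvdzr // /coprimez gcdzC; have := coprime_num_den x.
Qed.

Lemma inZpM x y : inZp p x -> inZp p y -> inZp p (x * y).
Proof.
rewrite /inZp => px py; apply/negP => pxy.
have : (`|denq (x * y)| %| `|denq x| * `|denq y|)%N.
  rewrite -abszM; apply: (denq_dvd_of_mulz (k := numq x * numq y)).
  by rewrite !rmorphM /= !numqE; ring.
by move/(dvdn_trans pxy); rewrite Euclid_dvdM // (negPf px) (negPf py).
Qed.

Lemma inZp_int (k : int) : inZp p k%:~R.
Proof. by rewrite /inZp denq_int dvdn1; case: eqP p_prime => [->|]. Qed.

Lemma inZpVz (k : int) : ~~ (p %| `|k|)%N -> inZp p (k%:~R)^-1.
Proof.
by case: (eqVneq k 0) => [->|k_neq0]; rewrite ?dvdn0 // /inZp denqVz.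
Qed.

Lemma inZpvecZ n (s : rat) (v : 'cV[rat]_n) : inZp p s -> inZpvec p v -> inZpvec p (s *: v).
Proof. by move=> ps /forallP pv; apply/forallP => i; rewrite mxE inZpM. Qed.

Lemma inZpmx_scalar n (k : int) : inZpmx p (k%:~R%:M : 'M[rat]_n).
Proof.
apply/forallP => i; apply/forallP => j; rewrite mxE.
by case: (i == j); rewrite ?mulr1n ?mulr0n ?(inZp_int 0) ?inZp_int.
Qed.

Lemma inOn_N1 n : inOn p ((-1)%:M : 'M[rat]_n).
Proof.
split.
- exact: (inZpmx_scalar _ (-1)).
- by rewrite unitmxE det_scalar unitfE expf_neq0 // oppr_eq0 oner_eq0.
- by rewrite invmx_scalar invrN1; exact: (inZpmx_scalar _ (-1)).
- move=> v _; rewrite mul_scalar_mx scaleN1r /sqform.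
  by apply: eq_bigr => i _; rewrite mxE sqrrN.
Qed.

End LocalIntegers.

Unset Implicit Arguments.
Theorem corollaryD (p : nat) (hp : prime p) (hodd : odd p) (n i : nat)
  (hi : (2 * i + 8 <= n)%N) :
  homology_vanishes (inOn p (n:=n)) (inZpvec p (n:=n)) i.
Proof.
have p_ndvd2 : ~~ (p %| `|(-2)%Z|)%N.
  apply: contraL hodd => /(dvdn_leq (isT : (0 < 2)%N)).
  by have := prime_gt1 hp; case: p {hp} => [|[|[]]].
apply: (@homology_vanishes_of_central_scalar _ _ _ _ (-1)) => //.
- by move=> v pv; rewrite -scaleN1r inZpvecZ // (inZp_int hp (-1)).
- exact: inOn_N1.
- by move=> v pv; rewrite invrN1 inZpvecZ // (inZpVz hp p_ndvd2).
Qed.
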